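(* Let $n,k\ge0$ be integers and assume the numbers $\alpha_i+im$, $i=0,\ldots,k$, are pairwise distinct. Then $$L_{m,\bar{\alpha}}(n,k)=\sum_{j=0}^{k}\frac{\prod_{i=0}^{n-1}(\alpha_j+jm+\alpha_i+im)}{\prod_{i=0,\,i\ne j}^{k}(\alpha_j+jm-\alpha_i-im)}.$$ Moreover, for all integers $n\ge k\ge1$, $$L_{m,\bar{\alpha}}(n,k)=\sum_{j=k}^{n}L_{m,\bar{\alpha}}(j-1,k-1)\prod_{i=j}^{n-1}(\alpha_i+im+\alpha_k+km).$$
   Context: Fix a real number $m$ and a sequence $\bar{\alpha}=(\alpha_0,\alpha_1,\ldots)$ of real numbers. Let $(x;\bar{\alpha}|m)_n=\prod_{j=0}^{n-1}(x-\alpha_j-jm)$, with $(x;\bar{\alpha}|m)_0=1$. The $\bar{\alpha}$-Whitney numbers of the first kind $w_{m,\bar{\alpha}}(n,k)$ and second kind $W_{m,\bar{\alpha}}(n,k)$ are defined by the polynomial identities $(x;\bar{\alpha}|m)_n=\sum_{k=0}^n w_{m,\bar{\alpha}}(n,k)x^k$ and $x^n=\sum_{k=0}^n W_{m,\bar{\alpha}}(n,k)(x;\bar{\alpha}|m)_k$, both vanishing for $k>n$ or $k<0$. The $\bar{\alpha}$-Whitney-Lah numbers are $$L_{m,\bar{\alpha}}(n,k)=\sum_{j=k}^{n}(-1)^{n-j}\,w_{m,\bar{\alpha}}(n,j)\,W_{m,\bar{\alpha}}(j,k),$$ with $L_{m,\bar{\alpha}}(0,0)=1$ and $L_{m,\bar{\alpha}}(n,k)=0$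 for $n<k$ or $k<0$. Empty products equal $1$. *)

(* Real parameters m, alpha are taken in an arbitrary
   realFieldType R (the statement is purely algebraic). *)
From HB Require Import structures.
From mathcomp Require Import all_boot all_order all_algebra.
Set Implicit Arguments. Unset Strict Implicit. Unset Printing Implicit Defensive.
Import Order.TTheory GRing.Theory Num.Theory.
Local Open Scope ring_scope.

Definition wbeta (R : ringType) (m : R) (alpha : nat -> R) (i : nat) : R :=
  alpha i + i%:R * m.

Definition gfall (R : comRingType) (m : R) (alpha : nat -> R) (n : nat) : {poly R} :=
  \prod_(j < n) ('X - (wbeta m alpha j)%:P).

Definition wfirst (R : comRingType) (m : R) (alpha : nat -> R) (n k : nat) : R :=
  (gfall m alpha n)`_k.

Definition is_wsecond (R : comRingType) (m : R) (alpha : nat -> R) (W : nat -> nat -> R) : Prop :=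
  (forall n k, (n < k)%N -> W n k = 0) /\
  (forall n, 'X^n = \sum_(k < n.+1) W n k *: gfall m alpha k).

Definition wlah (R : comRingType) (m : R) (alpha : nat -> R) (W : nat -> nat -> R) (n k : nat) : R :=
  \sum_(k <= j < n.+1) (-1) ^+ (n - j) * wfirst m alpha n j * W j k.

From HB Require Import structures.
From mathcomp Require Import all_boot all_order all_algebra.
From mathcomp Require Import ring.
Import Order.TTheory GRing.Theory Num.Theory.
Set Implicit Arguments. Unset Strict Implicit. Unset Printing Implicit Defensive.
Local Open Scope ring_scope.

(* Write b_i = alpha_i + i m. The x^j-coefficient of the rising factorial
   prod_(i < n) (x + b_i) is (-1)^(n-j) w(n,j), and x^j = sum_k W(j,k) (x;b)_k,
   so the Lah numbers L(n,k) are exactly the coordinates of the rising factorial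
   in the basis of falling factorials (x;b)_k.  Multiplying by
   x + b_n = (x - b_k) + (b_k + b_n) yields the triangular recursion
   L(n+1,k+1) = L(n,k) + (b_(k+1) + b_n) L(n,k+1), which unrolls to the second
   identity.  For the first one, the k-th divided difference at the distinct
   nodes b_0, ..., b_k returns the x^k-coefficient of any polynomial of degree
   at most k (Lagrange interpolation) and kills (x;b)_l for l > k, so it maps
   (x;b)_l to [l == k]; applied to the rising factorial it returns L(n,k). *)

Section GeneralizedFactorials.

Variables (R : comNzRingType) (b : nat -> R).

Definition falling n : {poly R} := \prod_(j < n) ('X - (b j)%:P).
Definition rising n : {poly R} := \prod_(j < n) ('X + (b j)%:P).

Lemma falling_monic n : falling n \is monic.
Proof. exact: monic_prod_XsubC. Qed.

Lemma size_falling n : size (falling n) = n.+1.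
Proof. by rewrite size_prod_XsubC /index_enum -enumT size_enum_ord. Qed.

Lemma coef_falling_size n : (falling n)`_n = 1.
Proof. by have /monicP := falling_monic n; rewrite /lead_coef size_falling. Qed.

Lemma coef_falling_gt n j : (n < j)%N -> (falling n)`_j = 0.
Proof. by move=> ltnj; apply: (leq_sizeP _ _ _ _ (leqnn _)); rewrite size_falling. Qed.

Lemma fallingS n : falling n.+1 = falling n * ('X - (b n)%:P).
Proof. by rewrite /falling big_ord_recr. Qed.

Lemma risingS n : rising n.+1 = rising n * ('X + (b n)%:P).
Proof. by rewrite /rising big_ord_recr. Qed.

Lemma horner_falling_eq0 n j : (j < n)%N -> (falling n).[b j] = 0.
Proof.
by move=> ltjn; rewrite horner_prod (bigD1 (Ordinal ltjn)) //= hornerXsubC subrr mul0r.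
Qed.

Lemma horner_rising n x : (rising n).[x] = \prod_(i < n) (x + b i).
Proof. by rewrite horner_prod; apply: eq_bigr => i _; rewrite hornerD hornerX hornerC. Qed.

Lemma falling_mulXaddC n c :
  falling n * ('X + c%:P) = falling n.+1 + (b n + c) *: falling n.
Proof. by rewrite fallingS -mul_polyC polyCD; ring. Qed.

Lemma falling_coord_eq0 N (c : nat -> R) :
  \sum_(k < N) c k *: falling k = 0 -> forall k, (k < N)%N -> c k = 0.
Proof.
elim: N => [//|N IH]; rewrite big_ord_recr /= => sum_eq0.
have cN0 : c N = 0.
  have := congr1 (fun p : {poly R} => p`_N) sum_eq0.
  rewrite coefD coef_sum coefZ coef_falling_size mulr1 coef0 big1 ?add0r //.
  by move=> i _; rewrite coefZ coef_falling_gt ?mulr0.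
move: sum_eq0; rewrite cN0 scale0r addr0 => /IH c0 k; rewrite ltnS leq_eqVlt.
by case/predU1P => [->|/c0].
Qed.

Lemma coef_rising n j : (rising n)`_j = (-1) ^+ (n - j) * (falling n)`_j.
Proof.
elim: n j => [|n IH] j; first by rewrite /rising /falling !big_ord0 mul1r.
rewrite risingS fallingS mulrDr mulrBr coefD coefB !coefMX !coefMC.
case: j => [|j] /=; first by rewrite IH !subn0 exprS !add0r; ring.
rewrite !IH subSS; have [ltjn|lenj] := ltnP j n.
  by rewrite -(subnSK ltjn) exprS; ring.
by rewrite (coef_falling_gt (j := j.+1)) ?ltnS //; ring.
Qed.

Lemma size_rising n : size (rising n) = n.+1.
Proof.
rewrite /rising (eq_bigr (fun j : 'I_n => 'X - (- b j)%:P)) => [|j _].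
  by rewrite size_prod_XsubC /index_enum -enumT size_enum_ord.
by rewrite polyCN opprK.
Qed.

End GeneralizedFactorials.

Section LahNumbers.

Variables (R : comNzRingType) (b : nat -> R) (W : nat -> nat -> R).

Definition lah n k : R :=
  \sum_(k <= j < n.+1) (-1) ^+ (n - j) * (falling b n)`_j * W j k.

Lemma lah_gt n k : (n < k)%N -> lah n k = 0.
Proof. by move=> ltnk; rewrite /lah big_geq. Qed.

Hypothesis W_gt : forall n k, (n < k)%N -> W n k = 0.
Hypothesis expXn_falling : forall n, 'X^n = \sum_(k < n.+1) W n k *: falling b k.

Lemma rising_falling_expansion n :
  rising b n = \sum_(k < n.+1) lah n k *: falling b k.
Proof.
rewrite -[LHS]coefK size_rising poly_def.
transitivity (\sum_(j < n.+1) \sum_(k < n.+1) ((rising b n)`_j * W j k) *: falling b k).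
  apply: eq_bigr => j _; rewrite expXn_falling scaler_sumr.
  rewrite (big_ord_widen n.+1 (fun k => (rising b n)`_j *: (W j k *: falling b k))) //.
  rewrite big_mkcond; apply: eq_bigr => k _.
  by case: ltnP => [_|ltjk]; rewrite ?scalerA // W_gt // mulr0 scale0r.
rewrite exchange_big; apply: eq_bigr => k _; rewrite -scaler_suml; congr (_ *: _).
rewrite /lah -(big_mkord xpredT (fun j => (rising b n)`_j * W j k)).
rewrite (big_cat_nat (n := k)) ?(ltnW (ltn_ord k)) //= big_nat big1 ?add0r.
  by apply: eq_bigr => j _; rewrite coef_rising.
by move=> j /andP[_ ltjk]; rewrite W_gt // mulr0.
Qed.

Lemma lahSS n k : lah n.+1 k.+1 = lah n k + (b k.+1 + b n) * lah n k.+1.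
Proof.
have [lekn|ltnk] := leqP k n; last by rewrite !lah_gt ?mulr0 ?addr0 // ltnW.
pose c i := (if i is i'.+1 then lah n i' else 0) + (b i + b n) * lah n i.
have rising_c : rising b n.+1 = \sum_(i < n.+2) c i *: falling b i.
  rewrite risingS rising_falling_expansion mulr_suml.
  under [in RHS]eq_bigr do rewrite scalerDl.
  rewrite big_split /= [in RHS](big_ord_recl n.+1) /= scale0r add0r.
  rewrite [in RHS](big_ord_recr n.+1) /= lah_gt // mulr0 scale0r addr0.
  rewrite -big_split /=; apply: eq_bigr => i _.
  by rewrite -scalerAl falling_mulXaddC scalerDr scalerA [lah n i * _]mulrC.
have /(falling_coord_eq0 (c := fun i => lah n.+1 i - c i)) :
    \sum_(i < n.+2) (lah n.+1 i - c i) *: falling b i = 0.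
  by under eq_bigr do rewrite scalerBl; rewrite sumrB -rising_c -rising_falling_expansion subrr.
by move/(_ k.+1); rewrite !ltnS => /(_ lekn)/eqP; rewrite subr_eq0 => /eqP.
Qed.

Lemma lah_sum_recursion n k : lah n k.+1 =
  \sum_(k.+1 <= j < n.+1) lah j.-1 k * \prod_(j <= i < n) (b i + b k.+1).
Proof.
elim: n => [|n IH]; first by rewrite lah_gt // big_geq.
have [lekn|ltnk] := leqP k n; last by rewrite lah_gt // big_geq.
rewrite lahSS big_nat_recr //= [in lah n k * _]big_geq // mulr1 addrC; congr (_ + _).
rewrite IH mulr_sumr; apply: eq_big_nat => j /andP[_ ltjn].
by rewrite big_nat_recr /=; [ring | rewrite -ltnS].
Qed.

End LahNumbers.

Section DividedDifferences.

Variables (F : fieldType) (b : nat -> F) (k : nat).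

Definition divdiff (f : F -> F) : F :=
  \sum_(j < k.+1) f (b j) / \prod_(i < k.+1 | i != j) (b j - b i).

Lemma divdiff_horner_sum N (c : nat -> F) (q : nat -> {poly F}) :
  divdiff (horner (\sum_(l < N) c l *: q l)) = \sum_(l < N) c l * divdiff (horner (q l)).
Proof.
rewrite /divdiff; under eq_bigr do rewrite horner_sum mulr_suml.
rewrite exchange_big; apply: eq_bigr => l _; rewrite mulr_sumr.
by apply: eq_bigr => j _; rewrite hornerZ mulrA.
Qed.

Hypothesis b_inj : injective (fun i : 'I_k.+1 => b i).

Let denom (j : 'I_k.+1) := \prod_(i < k.+1 | i != j) (b j - b i).
Let lagrange (j : 'I_k.+1) := \prod_(i < k.+1 | i != j) ('X - (b i)%:P).

Lemma denom_neq0 j : denom j != 0.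
Proof.
apply/prodf_neq0 => i neq_ij; rewrite subr_eq0.
by apply: contra neq_ij => /eqP/b_inj ->.
Qed.

Lemma horner_lagrange (j l : 'I_k.+1) :
  (lagrange j).[b l] = if l == j then denom j else 0.
Proof.
rewrite horner_prod; have [->|neq_lj] := eqVneq l j.
  by apply: eq_bigr => i _; rewrite hornerXsubC.
by rewrite (bigD1 l) //= hornerXsubC subrr mul0r.
Qed.

Lemma lagrange_monic j : lagrange j \is monic.
Proof. exact: monic_prod_XsubC. Qed.

Lemma size_lagrange j : size (lagrange j) = k.+1.
Proof.
have := size_falling b k.+1; rewrite /falling (bigD1 j) //= -/(lagrange j).
by rewrite size_Mmonic ?polyXsubC_eq0 ?lagrange_monic // size_XsubC add2n => -[].
Qed.

Lemma coef_lagrange_size j : (lagrange j)`_k = 1.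
Proof. by have /monicP := lagrange_monic j; rewrite /lead_coef size_lagrange. Qed.

Lemma lagrange_interpolation (p : {poly F}) : (size p <= k.+1)%N ->
  p = \sum_(j < k.+1) (p.[b j] / denom j) *: lagrange j.
Proof.
move=> size_p; apply/eqP; rewrite eq_sym -subr_eq0; apply/eqP.
apply: (roots_geq_poly_eq0 (rs := [seq b (val i) | i <- enum 'I_k.+1])).
- apply/allP => _ /mapP[l _ ->]; rewrite rootE hornerD hornerN horner_sum.
  rewrite (bigD1 l) //= big1 => [|j neq_jl]; last first.
    by rewrite hornerZ horner_lagrange eq_sym (negbTE neq_jl) mulr0.
  by rewrite hornerZ horner_lagrange eqxx mulfVK ?denom_neq0 // addr0 subrr.
- by rewrite map_inj_uniq ?enum_uniq.
- rewrite size_map size_enum_ord; apply: leq_trans (size_polyD _ _) _.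
  rewrite size_polyN geq_max size_p andbT.
  apply: (big_ind (fun q : {poly F} => size q <= k.+1)%N) => [|q r|j _].
  + by rewrite size_poly0.
  + by move=> sq sr; apply: leq_trans (size_polyD _ _) _; rewrite geq_max sq sr.
  + by apply: leq_trans (size_scale_leq _ _) _; rewrite size_lagrange.
Qed.

Lemma divdiff_poly (p : {poly F}) : (size p <= k.+1)%N -> divdiff (horner p) = p`_k.
Proof.
move=> size_p; rewrite [in RHS](lagrange_interpolation size_p) coef_sum.
by apply: eq_bigr => j _; rewrite coefZ coef_lagrange_size mulr1.
Qed.

Lemma divdiff_falling l : divdiff (horner (falling b l)) = (l == k)%:R.
Proof.
have [lelk|ltkl] := leqP l k.
  rewrite divdiff_poly ?size_falling //.
  have [->|neq_lk] := eqVneq l k; first by rewrite coef_falling_size.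
  by rewrite coef_falling_gt // ltn_neqAle neq_lk.
rewrite gtn_eqF // /divdiff big1 // => j _.
by rewrite horner_falling_eq0 ?mul0r // (leq_trans (ltn_ord j)).
Qed.

Lemma lah_divdiff (W : nat -> nat -> F) :
    (forall i j, (i < j)%N -> W i j = 0) ->
    (forall i, 'X^i = \sum_(j < i.+1) W i j *: falling b j) ->
  forall n, lah b W n k = divdiff (horner (rising b n)).
Proof.
move=> W_gt expXn_falling n.
rewrite (rising_falling_expansion W_gt expXn_falling) divdiff_horner_sum.
under eq_bigr do rewrite divdiff_falling.
have [ltkn|ltnk] := ltnP k n.+1.
  rewrite (bigD1 (Ordinal ltkn)) //= eqxx mulr1 big1 ?addr0 // => l.
  by rewrite -val_eqE /= => /negbTE ->; rewrite mulr0.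
rewrite lah_gt // big1 // => l _.
by rewrite ltn_eqF ?mulr0 // (leq_trans (ltn_ord l)).
Qed.

End DividedDifferences.

Theorem mainTheorem11 (R : realFieldType) (m : R) (alpha : nat -> R)
    (W : nat -> nat -> R) (HW : is_wsecond m alpha W) :
  (forall n k : nat,
     (forall i j : nat, (i <= k)%N -> (j <= k)%N -> i <> j ->
        wbeta m alpha i <> wbeta m alpha j) ->
     wlah m alpha W n k =
       \sum_(j < k.+1)
          (\prod_(i < n) (wbeta m alpha j + wbeta m alpha i)) /
          (\prod_(i < k.+1 | i != j) (wbeta m alpha j - wbeta m alpha i)))
  /\
  (forall n k : nat, (1 <= k)%N -> (k <= n)%N ->
     wlah m alpha W n k =
       \sum_(k <= j < n.+1)
          wlah m alpha W j.-1 k.-1 *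
          \prod_(j <= i < n) (wbeta m alpha i + wbeta m alpha k)).
Proof.
(* [wlah m alpha W] unfolds to [lah (wbeta m alpha) W]. *)
case: HW => W_gt expXn_falling; split=> [n k beta_neq | n [//|k] _ _].
  have beta_inj : injective (fun i : 'I_k.+1 => wbeta m alpha i).
    move=> i j eq_ij; apply/val_inj/eqP/negPn/negP => /eqP neq_ij.
    by apply: (beta_neq i j _ _ neq_ij eq_ij); rewrite -ltnS ltn_ord.
  apply: etrans (lah_divdiff beta_inj W_gt expXn_falling n) _.
  by apply: eq_bigr => j _; rewrite horner_rising.
exact: lah_sum_recursion.
Qed.
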